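(* Fix $\lambda_p,\lambda_s\in(0,1)$ and $p_a\in(0,1]$. On the set of $p_q\in(0,1)$ for which $(\lambda_p,\lambda_s)$ is in the stable region, i.e. $\lambda_p<\frac{f_{sd}(1-p_q)\mu_p}{f_{sd}(1-p_q)+p_a f_{ps}(1-f_{pd})}$ and $\lambda_s<p_q f_{sd}(1-\lambda_p/\mu_p)$ with $\mu_p=f_{pd}+p_a f_{ps}(1-f_{pd})$, the average PU delay $D_p$ is monotonically increasing in $p_q$ and the average SU delay $D_s$ is monotonically decreasing in $p_q$.
   Context: Constants $f_{pd},f_{ps},f_{sd}\in(0,1)$ with $f_{pd}<f_{sd}$. Set $a=p_a f_{ps}(1-f_{pd})$, $\mu_p=f_{pd}+a$. $D_p=(N_p+N_{sp})/\lambda_p$ and $D_s=N_s/\lambda_s$, where $N_p=\frac{\lambda_p-\lambda_p^2}{\mu_p-\lambda_p}$, $N_{sp}=\frac{m\lambda_p^2+n\lambda_p}{\alpha\lambda_p^2+\beta\lambda_p+\gamma}$, $N_s=\frac{\lambda_p\lambda_s A+(\lambda_s^2-\lambda_s)B(B+\lambda_p)}{BC}$ with $m=a\big[\frac{(1-p_q)f_{sd}-f_{pd}}{\mu_p}-(1-p_q)f_{sd}-a\big]$, $n=a\mu_p$, $\alpha=(1-p_q)f_{sd}+a$, $\beta=\mu_p[-2(1-p_q)f_{sd}-a]$, $\gamma=(1-p_q)f_{sd}\mu_p^2$, $A=p_q f_{sd}(\mu_p-1)$, $B=\mu_p-\lambda_p$, $C=(\lambda_s-p_q f_{sd})\mu_p+p_q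 f_{sd}\lambda_p$. These are the average packet delays of the PU and SU in a cognitive relaying system where the SU serves its own queue w.p. $p_q$ (relay queue w.p. $1-p_q$) when the PU is idle, and admits undelivered overheard PU packets to its relay queue w.p. $p_a$. *)

From Stdlib Require Import Reals.
Open Scope R_scope.

Definition a_ (pa fpd fps : R) : R := pa * fps * (1 - fpd).
Definition mu_p (pa fpd fps : R) : R := fpd + a_ pa fpd fps.

Definition Dp (fpd fps fsd pa pq lp : R) : R :=
  let a := a_ pa fpd fps in
  let mu := mu_p pa fpd fps in
  let m := a * (((1 - pq) * fsd - fpd) / mu - (1 - pq) * fsd - a) in
  let n := a * mu in
  let alpha := (1 - pq) * fsd + a in
  let beta := mu * (- 2 * (1 - pq) * fsd - a) in
  let gamma := (1 - pq) * fsd * mu ^ 2 in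
  let Np := (lp - lp ^ 2) / (mu - lp) in
  let Nsp := (m * lp ^ 2 + n * lp) / (alpha * lp ^ 2 + beta * lp + gamma) in
  (Np + Nsp) / lp.

Definition Ds (fpd fps fsd pa pq lp ls : R) : R :=
  let mu := mu_p pa fpd fps in
  let A := pq * fsd * (mu - 1) in
  let B := mu - lp in
  let C := (ls - pq * fsd) * mu + pq * fsd * lp in
  let Ns := (lp * ls * A + (ls ^ 2 - ls) * B * (B + lp)) / (B * C) in
  Ns / ls.

Definition stable (fpd fps fsd pa pq lp ls : R) : Prop :=
  0 < pq < 1 /\
  lp < fsd * (1 - pq) * mu_p pa fpd fps / (fsd * (1 - pq) + a_ pa fpd fps) /\
  ls < pq * fsd * (1 - lp / mu_p pa fpd fps).

(* Both delays depend on p_q only through a Moebius transformation of one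
   service rate: D_p through the relay-queue rate (1 - p_q) f_sd and D_s
   through the SU-queue rate p_q f_sd.  In the stable region both such maps
   have a positive denominator and a negative determinant, hence are
   decreasing; since (1 - p_q) f_sd decreases and p_q f_sd increases with p_q,
   D_p increases and D_s decreases. *)
From Stdlib Require Import Reals Lra.
Open Scope R_scope.

Definition moebius (c1 c0 d1 d0 x : R) : R := (c1 * x + c0) / (d1 * x - d0).

Lemma moebius_decreasing (c1 c0 d1 d0 x y : R) :
  0 < c1 * d0 + c0 * d1 -> d0 < d1 * x -> d0 < d1 * y -> x < y ->
  moebius c1 c0 d1 d0 y < moebius c1 c0 d1 d0 x.
Proof.
  intros Hdet Hx Hy Hxy; unfold moebius.
  assert (Hdiff : (c1 * x + c0) / (d1 * x - d0) - (c1 * y + c0) / (d1 * y - d0)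
                  = (y - x) * (c1 * d0 + c0 * d1) / ((d1 * x - d0) * (d1 * y - d0)))
    by (field; lra).
  assert (0 < (y - x) * (c1 * d0 + c0 * d1) / ((d1 * x - d0) * (d1 * y - d0))).
  { apply Rdiv_lt_0_compat; apply Rmult_lt_0_compat; lra. }
  lra.
Qed.

Lemma a_pos (pa fpd fps : R) : 0 < pa -> 0 < fps -> fpd < 1 -> 0 < a_ pa fpd fps.
Proof. intros; unfold a_; repeat apply Rmult_lt_0_compat; lra. Qed.

Lemma mu_p_lt_1 (pa fpd fps : R) :
  0 < pa <= 1 -> 0 < fps < 1 -> fpd < 1 -> mu_p pa fpd fps < 1.
Proof. intros; unfold mu_p, a_; assert (pa * fps < 1) by nra; nra. Qed.

Lemma Dp_moebius (fpd fps fsd pa pq lp : R) :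
  let a := a_ pa fpd fps in
  let mu := mu_p pa fpd fps in
  0 < lp -> 0 < mu -> lp < mu -> a * lp < (1 - pq) * fsd * (mu - lp) ->
  Dp fpd fps fsd pa pq lp =
  (1 - lp) / (mu - lp) + a / (mu * (mu - lp)) *
  moebius (lp * (1 - mu)) (mu ^ 2 - lp * (fpd + a * mu)) (mu - lp) (a * lp)
          ((1 - pq) * fsd).
Proof.
  intros a mu Hlp Hmu Hlpmu Hrelay; unfold Dp, moebius; cbv zeta; fold a mu.
  assert (Hfactor : ((1 - pq) * fsd + a) * lp ^ 2 + mu * (- 2 * (1 - pq) * fsd - a) * lp
                    + (1 - pq) * fsd * mu ^ 2
                    = (mu - lp) * ((mu - lp) * ((1 - pq) * fsd) - a * lp)) by ring.
  rewrite Hfactor.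
  field; repeat split; nra.
Qed.

Lemma Ds_moebius (fpd fps fsd pa pq lp ls : R) :
  let mu := mu_p pa fpd fps in
  0 < ls -> lp < mu -> ls * mu < pq * fsd * (mu - lp) ->
  Ds fpd fps fsd pa pq lp ls =
  / (mu - lp) *
  moebius (lp * (1 - mu)) ((1 - ls) * (mu - lp) * mu) (mu - lp) (ls * mu) (pq * fsd).
Proof.
  intros mu Hls Hlpmu Hsu; unfold Ds, moebius; cbv zeta; fold mu.
  field; repeat split; nra.
Qed.

Lemma stable_service_bounds (fpd fps fsd pa pq lp ls : R) :
  let a := a_ pa fpd fps in
  let mu := mu_p pa fpd fps in
  0 < fsd -> 0 < a -> 0 < mu -> 0 < lp ->
  stable fpd fps fsd pa pq lp ls ->
  lp < mu /\ a * lp < (1 - pq) * fsd * (mu - lp) /\ ls * mu < pq * fsd * (mu - lp).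
Proof.
  intros a mu Hfsd Ha Hmu Hlp [Hpq [Hrelay Hsu]]; fold a mu in Hrelay, Hsu.
  assert (Hq : 0 < fsd * (1 - pq)) by nra.
  apply (Rmult_lt_compat_r (fsd * (1 - pq) + a)) in Hrelay; [|lra].
  replace (fsd * (1 - pq) * mu / (fsd * (1 - pq) + a) * (fsd * (1 - pq) + a))
    with (fsd * (1 - pq) * mu) in Hrelay by (field; lra).
  apply (Rmult_lt_compat_r mu) in Hsu; [|lra].
  replace (pq * fsd * (1 - lp / mu) * mu) with (pq * fsd * (mu - lp)) in Hsu
    by (field; lra).
  repeat split; nra.
Qed.

Lemma Dp_increasing (fpd fps fsd pa pq1 pq2 lp : R) :
  let a := a_ pa fpd fps in
  let mu := mu_p pa fpd fps in
  0 < fpd -> 0 < fsd -> 0 < a -> mu < 1 -> 0 < lp -> lp < mu ->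
  a * lp < (1 - pq1) * fsd * (mu - lp) -> a * lp < (1 - pq2) * fsd * (mu - lp) ->
  pq1 < pq2 ->
  Dp fpd fps fsd pa pq1 lp < Dp fpd fps fsd pa pq2 lp.
Proof.
  intros a mu Hfpd Hfsd Ha Hmu1 Hlp Hlpmu Hrelay1 Hrelay2 Hpq.
  assert (Hmu : 0 < mu) by lra.
  rewrite (Dp_moebius _ _ _ _ pq1) by assumption.
  rewrite (Dp_moebius _ _ _ _ pq2) by assumption.
  fold a mu.
  apply Rplus_lt_compat_l, Rmult_lt_compat_l.
  - apply Rdiv_lt_0_compat; nra.
  - assert (Hmu_def : mu = fpd + a) by reflexivity.
    assert (Hrate : fpd + a * mu < mu) by nra.
    assert (Hc0 : lp * (fpd + a * mu) < mu * mu) by nra.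
    apply moebius_decreasing; nra.
Qed.

Lemma Ds_decreasing (fpd fps fsd pa pq1 pq2 lp ls : R) :
  let mu := mu_p pa fpd fps in
  0 < fsd -> 0 < mu < 1 -> 0 < lp -> lp < mu -> 0 < ls < 1 ->
  ls * mu < pq1 * fsd * (mu - lp) -> ls * mu < pq2 * fsd * (mu - lp) ->
  pq1 < pq2 ->
  Ds fpd fps fsd pa pq2 lp ls < Ds fpd fps fsd pa pq1 lp ls.
Proof.
  intros mu Hfsd Hmu Hlp Hlpmu Hls Hsu1 Hsu2 Hpq.
  rewrite (Ds_moebius _ _ _ _ pq1) by (assumption || lra).
  rewrite (Ds_moebius _ _ _ _ pq2) by (assumption || lra).
  fold mu.
  apply Rmult_lt_compat_l.
  - apply Rinv_0_lt_compat; lra.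
  - assert (0 < lp * (1 - mu) * (ls * mu))
      by (repeat apply Rmult_lt_0_compat; lra).
    assert (0 < (1 - ls) * (mu - lp) * mu * (mu - lp))
      by (repeat apply Rmult_lt_0_compat; lra).
    apply moebius_decreasing; nra.
Qed.

Theorem lemma3 (fpd fps fsd lp ls pa : R) :
  0 < fpd < 1 -> 0 < fps < 1 -> 0 < fsd < 1 -> fpd < fsd ->
  0 < lp < 1 -> 0 < ls < 1 -> 0 < pa <= 1 ->
  forall pq1 pq2 : R,
    stable fpd fps fsd pa pq1 lp ls ->
    stable fpd fps fsd pa pq2 lp ls ->
    pq1 < pq2 ->
    Dp fpd fps fsd pa pq1 lp < Dp fpd fps fsd pa pq2 lp /\
    Ds fpd fps fsd pa pq2 lp ls < Ds fpd fps fsd pa pq1 lp ls.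
Proof.
  intros Hfpd Hfps Hfsd _ Hlp Hls Hpa pq1 pq2 Hstable1 Hstable2 Hpq.
  assert (Ha : 0 < a_ pa fpd fps) by (apply a_pos; lra).
  assert (Hmu1 : mu_p pa fpd fps < 1) by (apply mu_p_lt_1; lra).
  assert (Hmu0 : 0 < mu_p pa fpd fps) by (unfold mu_p; lra).
  destruct (stable_service_bounds fpd fps fsd pa pq1 lp ls
              ltac:(lra) Ha Hmu0 ltac:(lra) Hstable1) as [Hlpmu [Hrelay1 Hsu1]].
  destruct (stable_service_bounds fpd fps fsd pa pq2 lp ls
              ltac:(lra) Ha Hmu0 ltac:(lra) Hstable2) as [_ [Hrelay2 Hsu2]].
  split.
  - apply Dp_increasing; lra.
  - apply Ds_decreasing; lra.
Qed.
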